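(* Let $G$ be a connected graph with minimum degree $\delta\geq 2$ such that $|d_i-d_j|\leq (2\delta-1)^{2}$ for every edge $v_iv_j\in E(G)$. Then $GA(G)>ABC(G)$.
   Context: All graphs are finite, simple and undirected; $d_i$ denotes the degree of vertex $v_i$. The first geometric-arithmetic index is $GA(G)=\sum_{v_iv_j\in E(G)}\frac{2\sqrt{d_id_j}}{d_i+d_j}$ and the atom-bond connectivity index is $ABC(G)=\sum_{v_iv_j\in E(G)}\sqrt{\frac{d_i+d_j-2}{d_id_j}}$. *)

From mathcomp Require Import all_boot all_order all_algebra.
Set Implicit Arguments. Unset Strict Implicit. Unset Printing Implicit Defensive.
Import Order.TTheory GRing.Theory Num.Theory.

Definition simple_graph (T : finType) (e : rel T) : Prop :=
  symmetric e /\ irreflexive e.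

Definition connected_graph (T : finType) (e : rel T) : Prop :=
  forall x y : T, connect e x y.

Definition deg (T : finType) (e : rel T) (v : T) : nat := #|[set u | e v u]|.

Definition is_min_degree (T : finType) (e : rel T) (delta : nat) : Prop :=
  (exists v, deg e v = delta) /\ (forall v, delta <= deg e v).

Local Open Scope ring_scope.

(* Sums over edges: each unordered edge {u,v} appears as two ordered pairs
   (u,v),(v,u); the summands are symmetric, so we halve the ordered sum. *)
Definition GA_index (R : rcfType) (T : finType) (e : rel T) : R :=
  (2%:R)^-1 * \sum_(u : T) \sum_(v : T | e u v)
    (2%:R * Num.sqrt ((deg e u)%:R * (deg e v)%:R) / ((deg e u)%:R + (deg e v)%:R)).

Definition ABC_index (R : rcfType) (T : finType) (e : rel T) : R :=
  (2%:R)^-1 * \sum_(u : T) \sum_(v : T | e u v)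
    Num.sqrt (((deg e u)%:R + (deg e v)%:R - 2%:R) / ((deg e u)%:R * (deg e v)%:R)).

Definition deg_gap (T : finType) (e : rel T) (u v : T) : nat :=
  absz (Posz (deg e u) - Posz (deg e v)).

From mathcomp Require Import all_boot all_order all_algebra.
From mathcomp Require Import ring lra.
Import Order.TTheory GRing.Theory Num.Theory.
Local Open Scope ring_scope.

(* Both indices sum a term over the edges, so it suffices to compare the two
   terms edge by edge.  For end degrees x <= y, squaring shows that the ABC term
   is below the GA term iff (x + y)^2 (x + y - 2) < 4 x^2 y^2.  Writing
   y = x + k and K = (2x - 1)^2, the gap hypothesis together with x >= delta
   gives 0 <= k <= K, and the difference of the two sides is
   k^2 (K - k) + (2x - 1) k (K - k) + (2x + 1) k + 4 x^2 ((x - 1)^2 + 1) > 0. *)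

Lemma gap_cubic_lt (R : realFieldType) (a k : R) :
  1 <= 2 * a -> 0 <= k -> k <= (2 * a - 1) ^+ 2 ->
  (2 * a + k) ^+ 2 * (2 * a + k - 2) < 4 * a ^+ 2 * (a + k) ^+ 2.
Proof.
move=> ha k_ge0 k_le; rewrite -subr_gt0.
set K := (2 * a - 1) ^+ 2 in k_le *.
have -> : 4 * a ^+ 2 * (a + k) ^+ 2 - (2 * a + k) ^+ 2 * (2 * a + k - 2) =
    k ^+ 2 * (K - k) + (2 * a - 1) * k * (K - k) + (2 * a + 1) * k
    + 4 * a ^+ 2 * ((a - 1) ^+ 2 + 1) by rewrite /K; ring.
have Kk : 0 <= K - k by rewrite subr_ge0.
have t1 : 0 <= k ^+ 2 * (K - k) by rewrite mulr_ge0 ?sqr_ge0.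
have t2 : 0 <= (2 * a - 1) * k * (K - k) by rewrite !mulr_ge0 //; lra.
have t3 : 0 <= (2 * a + 1) * k by rewrite mulr_ge0 //; lra.
have t4 : 0 < 4 * a ^+ 2 * ((a - 1) ^+ 2 + 1).
  rewrite !mulr_gt0 ?exprn_gt0 //; [lra | lra | ].
  by rewrite ltr_wpDl ?sqr_ge0.
lra.
Qed.

Lemma degree_pair_cubic_lt (R : realFieldType) (x y d : R) :
  1 <= 2 * d -> d <= x -> d <= y -> `|x - y| <= (2 * d - 1) ^+ 2 ->
  (x + y) ^+ 2 * (x + y - 2) < 4 * x ^+ 2 * y ^+ 2.
Proof.
move=> hd.
wlog xy : x y / x <= y => [W dx dy gap | dx dy gap].
  have [xy|/ltW yx] := leP x y; first exact: (W x y xy dx dy gap).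
  by rewrite [x + y]addrC [4 * _ * _]mulrAC; apply: W; rewrite // distrC.
have [k yE] : exists k, y = x + k by exists (y - x); rewrite addrC subrK.
subst y.
have -> : x + (x + k) = 2 * x + k by ring.
have k_ge0 : 0 <= k by lra.
apply: gap_cubic_lt; [lra | exact: k_ge0 |].
have sq_le : (2 * d - 1) ^+ 2 <= (2 * x - 1) ^+ 2.
  by rewrite ler_sqr ?nnegrE //; lra.
apply: le_trans sq_le; apply: le_trans gap.
by rewrite opprD addrA subrr sub0r normrN ger0_norm.
Qed.

Lemma ABC_edge_lt_GA_edge (R : rcfType) (x y : R) :
  0 < x -> 0 < y -> 2 <= x + y ->
  (x + y) ^+ 2 * (x + y - 2) < 4 * x ^+ 2 * y ^+ 2 ->
  Num.sqrt ((x + y - 2%:R) / (x * y)) < 2%:R * Num.sqrt (x * y) / (x + y).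
Proof.
move=> x_gt0 y_gt0 s_ge2 cubic_lt.
have xy_gt0 : 0 < x * y by rewrite mulr_gt0.
have s_gt0 : 0 < x + y by lra.
have q_ge0 : 0 <= 2%:R * Num.sqrt (x * y) / (x + y).
  by rewrite divr_ge0 ?mulr_ge0 ?sqrtr_ge0 ?ltW.
rewrite -ltr_sqr ?nnegrE ?sqrtr_ge0 //.
rewrite sqr_sqrtr; last by apply: divr_ge0; lra.
rewrite expr_div_n exprMn sqr_sqrtr ?ltW //.
rewrite ltr_pdivrMr // mulrAC ltr_pdivlMr ?exprn_gt0 //.
nra.
Qed.

Lemma natr_distn (R : numDomainType) (m n : nat) :
  (absz (Posz m - Posz n))%:R = `|m%:R - n%:R| :> R.
Proof. by rewrite natr_absz intr_norm intrB. Qed.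

Lemma ltr_sum_adjacent (R : numDomainType) (T : finType) (e : rel T)
    (F G : T -> T -> R) (x0 : T) :
  (forall u, exists v, e u v) -> (forall u v, e u v -> F u v < G u v) ->
  \sum_u \sum_(v | e u v) F u v < \sum_u \sum_(v | e u v) G u v.
Proof.
move=> nbr FG; apply: ltr_sum => [|u _]; first by apply/hasP; exists x0.
have [v euv] := nbr u.
by apply: ltr_sum => [|v' /FG //]; apply/hasP; exists v.
Qed.

Lemma deg_neighbour (T : finType) (e : rel T) (u : T) :
  (0 < deg e u)%N -> exists v, e u v.
Proof. by case/card_gt0P => v; rewrite inE; exists v. Qed.

Theorem theorem3p5 (R : rcfType) (T : finType) (e : rel T) (delta : nat) :
  simple_graph e ->
  connected_graph e ->
  is_min_degree e delta ->
  (2 <= delta)%N ->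
  (forall u v : T, e u v -> (deg_gap e u v <= (2 * delta - 1) ^ 2)%N) ->
  (ABC_index R e < GA_index R e)%R.
Proof.
move=> _ _ [[v0 _] deg_ge] delta_ge2 gap_le.
have deg_ge2 u : (2 <= deg e u)%N := leq_trans delta_ge2 (deg_ge u).
rewrite /ABC_index /GA_index ltr_pM2l ?invr_gt0 ?ltr0n //.
apply: (@ltr_sum_adjacent _ _ _ _ _ v0) => [u | u v euv].
  exact/deg_neighbour/ltnW.
have du : 2 <= (deg e u)%:R :> R by rewrite (ler_nat R 2).
have dv : 2 <= (deg e v)%:R :> R by rewrite (ler_nat R 2).
apply: ABC_edge_lt_GA_edge; [lra | lra | lra |].
apply: (@degree_pair_cubic_lt _ _ _ delta%:R); rewrite ?ler_nat //.
- have : 2 <= delta%:R :> R by rewrite (ler_nat R 2).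
  lra.
- have natr_bound : (2 * delta - 1)%N%:R = 2 * delta%:R - 1 :> R.
    by rewrite natrB ?natrM // muln_gt0 (ltnW delta_ge2).
  have := gap_le u v euv.
  by rewrite -(ler_nat R) /deg_gap natr_distn natrX natr_bound.
Qed.
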